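(* Let $I=(i_1<i_2<\cdots<i_r)$ be strictly increasing with $r\geq1$, and let $\chi_I=\sum_{\varepsilon\in\{0,1\}^r}a_I^\varepsilon w_I^\varepsilon$ with $a_I^\varepsilon\in\mathcal B$. Then: (A) if $\beta(\chi_I)=\gamma(\chi_I)$, then $\chi_I=aS_I$ for some $a\in\mathcal B$; (B) if $\beta(\chi_I)=0$, then $\chi_I=0$; (C) if $\beta(\chi_I)=\delta(\chi_I)$, then $\chi_I\in\mathcal B\otimes1\otimes\land W$.
   Context: $\mathcal B$ is a graded commutative rational algebra and $W$ a graded rational vector space concentrated in odd degrees with basis $\{w_i\}$ indexed by a totally ordered set. In $\mathcal B\otimes\land W\otimes\land W$ write $w_i^0=w_i=1\otimes w_i\otimes1$, $w_i^1=w'_i=1\otimes1\otimes w_i$, $w_I^\varepsilon=w_{i_1}^{\epsilon_1}\cdots w_{i_r}^{\epsilon_r}$, and $S_I=(w_{i_1}+w'_{i_1})\cdots(w_{i_r}+w'_{i_r})$. In $\mathcal B\otimes\land W^{\otimes3}$ write $w,w',w''$ for $w$ in the three copies. Algebra maps $\alpha,\beta,\gamma,\delta\colon\mathcal B\otimes\land W\otimes\land W\to\mathcal B\otimes\land W\otimes\land W\otimes\land W$, identity on $\mathcal B$: $\alpha(w)=w,\alpha(w')=w'$; $\beta(w)=w+w',\beta(w')=w''$; $\gamma(w)=w,\gamma(w')=w'+w''$; $\delta(w)=w',\delta(w')=w''$. *)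

From HB Require Import structures.
From mathcomp Require Import all_boot all_order all_algebra.
Set Implicit Arguments. Unset Strict Implicit. Unset Printing Implicit Defensive.
Import Order.TTheory GRing.Theory Num.Theory.
Local Open Scope ring_scope.

(* Bd n is the homogeneous component of degree n. *)
Definition graded_comm (B : algType rat) (Bd : nat -> pred B) : Prop :=
  [/\ (forall n, (0 : B) \in Bd n /\
         forall (c : rat) (x y : B), x \in Bd n -> y \in Bd n -> c *: x + y \in Bd n),
      (forall b : B, exists (N : nat) (bs : nat -> B),
           (forall n, bs n \in Bd n) /\ b = \sum_(n < N) bs n),
      (forall (N : nat) (bs : nat -> B), (forall n, bs n \in Bd n) ->
           \sum_(n < N) bs n = 0 -> forall n, (n < N)%N -> bs n = 0),
      (1 : B) \in Bd 0%N
    & forall (m n : nat) (x y : B), x \in Bd m -> y \in Bd n ->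
           x * y \in Bd (m + n)%N /\ x * y = (-1) ^+ (m * n) * (y * x) ].

(* An element of Lambda(X) (over Z) is given by its coordinates on the basis
   e_A (A : {set X}), where e_A is the product of the generators of A taken in
   the enumeration order of X. *)
Definition ext (X : finType) := {ffun {set X} -> int}.

(* sign of e_A e_B = sgn A B e_(A :|: B) for disjoint A B *)
Definition sgn (X : finType) (A C : {set X}) : int :=
  (-1) ^+ #|[set p in setX A C | (enum_rank p.2 < enum_rank p.1)%N]|.

Definition extmul (X : finType) (f g : ext X) : ext X :=
  [ffun D => \sum_(A : {set X}) \sum_(C : {set X} | (A :&: C == set0) && (A :|: C == D))
                sgn A C * f A * g C].
Definition extadd (X : finType) (f g : ext X) : ext X := [ffun D => f D + g D].
Definition ext1 (X : finType) : ext X := [ffun A => ((A == set0) : nat)%:R].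
Definition gen (X : finType) (x : X) : ext X := [ffun A => ((A == [set x]) : nat)%:R].
Definition extprod (X : finType) (s : seq (ext X)) : ext X := foldr (@extmul X) (ext1 X) s.

Definition Bext (B : algType rat) (X : finType) := {ffun {set X} -> B}.
Definition tens (B : algType rat) (X : finType) (b : B) (m : ext X) : Bext B X :=
  [ffun A => b *~ m A].
Definition Bzero (B : algType rat) (X : finType) : Bext B X := [ffun _ => 0].

(* The algebra map B (x) Lambda(X) -> B (x) Lambda(Y), identity on B, sending
   each generator x to phi x (phi x is a linear combination of generators):
   e_A = x1 ... xk (in order) is sent to phi x1 ... phi xk. *)
Definition extmap (X Y : finType) (phi : X -> ext Y) (A : {set X}) : ext Y :=
  extprod [seq phi x | x <- enum A].
Definition Bmap (B : algType rat) (X Y : finType) (phi : X -> ext Y)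
    (chi : Bext B X) : Bext B Y :=
  [ffun D => \sum_(A : {set X}) chi A *~ extmap phi A D].

(* Generators w_{i_j} (j < r) in the copies of W: (j, c) is the copy-c
   version of w_{i_j}.  Two copies: c = 0 (w), c = 1 (w').
   Three copies: c = 0 (w), 1 (w'), 2 (w''). *)
Definition o2_0 : 'I_2 := @Ordinal 2 0 isT.
Definition o2_1 : 'I_2 := @Ordinal 2 1 isT.
Definition o3_0 : 'I_3 := @Ordinal 3 0 isT.
Definition o3_1 : 'I_3 := @Ordinal 3 1 isT.
Definition o3_2 : 'I_3 := @Ordinal 3 2 isT.

Definition X2 (r : nat) := ('I_r * 'I_2)%type.
Definition X3 (r : nat) := ('I_r * 'I_3)%type.

Definition beta_gen (r : nat) (x : X2 r) : ext (X3 r) :=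
  if x.2 == o2_0 then extadd (gen (x.1, o3_0)) (gen (x.1, o3_1)) else gen (x.1, o3_2).
Definition gamma_gen (r : nat) (x : X2 r) : ext (X3 r) :=
  if x.2 == o2_0 then gen (x.1, o3_0) else extadd (gen (x.1, o3_1)) (gen (x.1, o3_2)).
Definition delta_gen (r : nat) (x : X2 r) : ext (X3 r) :=
  if x.2 == o2_0 then gen (x.1, o3_1) else gen (x.1, o3_2).
Definition alpha_gen (r : nat) (x : X2 r) : ext (X3 r) :=
  if x.2 == o2_0 then gen (x.1, o3_0) else gen (x.1, o3_1).

(* w_I^eps = w_{i_1}^{eps_1} ... w_{i_r}^{eps_r}; eps j = true means the primed copy *)
Definition wI (r : nat) (eps : {ffun 'I_r -> bool}) : ext (X2 r) :=
  extprod [seq gen (j, if eps j then o2_1 else o2_0) | j <- enum 'I_r].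

Definition SI (r : nat) : ext (X2 r) :=
  extprod [seq extadd (gen (j, o2_0)) (gen (j, o2_1)) | j <- enum 'I_r].

Definition chiI (B : algType rat) (r : nat) (a : {ffun 'I_r -> bool} -> B) : Bext B (X2 r) :=
  [ffun D => \sum_(eps : {ffun 'I_r -> bool}) a eps *~ wI eps D].

Definition in_B_1_LW (B : algType rat) (r : nat) (chi : Bext B (X2 r)) : Prop :=
  forall A : {set X2 r}, [exists x in A, x.2 == o2_0] -> chi A = 0.

From HB Require Import structures.
From mathcomp Require Import all_boot all_order all_algebra.
From mathcomp Require Import zify.
Import GRing.Theory.
Local Open Scope ring_scope.

(* The maps beta, gamma, delta send the generators of the j-th
   block {w_(i_j), w'_(i_j)} to combinations of the generators of the j-th
   block {w_(i_j), w'_(i_j), w''_(i_j)}.  A set of generators choosing exactly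
   one copy in every block is the graph of a choice function; the monomial
   w_I^eps is the basis monomial of the graph of eps, and the image of a
   graph monomial under such a block map has, on the graph monomial of
   g : 'I_r -> 'I_3, the coefficient \prod_j (coefficient of w_(i_j)^(g j) in
   the image of w_(i_j)^(eps j)); on non-graph monomials it vanishes.
     For beta the copy eps j is determined by g j (eps j <-> g j = 2), so the
   coefficient of beta(chi_I) on the graph of g is a single a_I^eps; the same
   holds for gamma (eps j <-> g j <> 0) and, when no g j is 0, for delta.
   Comparing coefficients on a well-chosen g yields (A) a_I^eps = a_I^0,
   (B) a_I^eps = 0 and (C) a_I^eps = 0 unless all eps j are primed. *)

Set Implicit Arguments. Unset Strict Implicit. Unset Printing Implicit Defensive.

Lemma extmulE (X : finType) (f g : ext X) (D : {set X}) :
  extmul f g D = \sum_(A : {set X} | A \subset D) sgn A (D :\: A) * f A * g (D :\: A).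
Proof.
rewrite ffunE (bigID (fun A : {set X} => A \subset D)) /= [X in _ + X]big1 ?addr0.
  apply: eq_bigr => A sAD; rewrite (big_pred1 (D :\: A)) // => C /=.
  apply/idP/eqP => [/andP[/eqP AC0 /eqP <-]|->].
    apply/setP => x; rewrite !inE; case Cx: (x \in C); case Ax: (x \in A) => //=.
    have : x \in A :&: C by rewrite inE Ax Cx.
    by rewrite AC0 inE.
  apply/andP; split; apply/eqP/setP => x; rewrite !inE; case Ax: (x \in A) => //=.
  by rewrite (subsetP sAD x Ax).
move=> A nsAD; apply: big1 => C /andP[_ /eqP ACD].
by rewrite -ACD subsetUl in nsAD.
Qed.

Lemma sgn_ordered (X : finType) (A C : {set X}) :
  {in A & C, forall x y, enum_rank x < enum_rank y}%N -> sgn A C = 1.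
Proof.
move=> AltC; rewrite /sgn.
suff -> : [set p in setX A C | (enum_rank p.2 < enum_rank p.1)%N] = set0.
  by rewrite cards0 expr0.
apply/setP => -[x y]; rewrite !inE /=.
by apply/negbTE/andP => -[/andP[xA yC]]; rewrite ltnNge ltnW // AltC.
Qed.

Lemma enum_rank_pair_lt (I T : finType) (i i' : I) (t t' : T) :
  (enum_rank i < enum_rank i')%N -> (enum_rank (i, t) < enum_rank (i', t'))%N.
Proof.
have rankE (Y : finType) (y : Y) : (enum_rank y : nat) = index y (enum Y).
  by rewrite -{2}(nth_enum_rank y y) index_uniq ?enum_uniq // -cardE ltn_ord.
have index_pair (s1 : seq I) (s2 : seq T) x y : x \in s1 -> y \in s2 ->
    index (x, y) [seq (x1, x2) | x1 <- s1, x2 <- s2] =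
    (index x s1 * size s2 + index y s2)%N.
  move=> + ys2; elim: s1 => //= z s1 IH; rewrite inE index_cat.
  case: (eqVneq x z) => [->|nxz] /=; first by rewrite map_f // index_map // => ? ? [].
  have -> : ((x, y) \in [seq (z, x2) | x2 <- s2]) = false.
    by apply/negbTE/mapP => -[? _ [exz _]]; rewrite exz eqxx in nxz.
  by move=> xs1; rewrite size_map IH // mulSn addnA.
move=> lt_ii'; rewrite !rankE in lt_ii'.
rewrite !rankE enumT unlock /= /prod_enum !index_pair ?mem_enum //.
have : (index t (enum T) < size (enum T))%N by rewrite index_mem mem_enum.
nia.
Qed.

Section BlockProducts.
Variables I T : finType.
Local Notation X := (I * T)%type.

Definition block (i : I) (v : ext X) : Prop :=
  forall A, v A != 0 -> exists t, A = [set (i, t)].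

Lemma gen_block (i : I) (t : T) : block i (gen (i, t)).
Proof.
by move=> A; rewrite ffunE; case: (eqVneq A [set (i, t)]) => [-> _|]; [exists t|].
Qed.

Lemma extadd_block (i : I) (u v : ext X) :
  block i u -> block i v -> block i (extadd u v).
Proof.
move=> bu bv A; rewrite ffunE.
by case: (eqVneq (u A) 0) => [->|/bu //]; rewrite add0r; apply: bv.
Qed.

Definition graph_on (f : I -> T) (s : seq I) : {set X} :=
  [set:: [seq (i, f i) | i <- s]].

Lemma mem_graph_on (f : I -> T) s i t :
  ((i, t) \in graph_on f s) = (i \in s) && (t == f i).
Proof.
rewrite inE; apply/mapP/andP => [[j js [-> ->]]|[is_ /eqP ->]]; last by exists i.
by rewrite js eqxx.
Qed.

Lemma graph_on_cons (f : I -> T) i s : graph_on f (i :: s) = (i, f i) |: graph_on f s.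
Proof. by rewrite /graph_on /= set_cons. Qed.

Lemma eq_graph_on (f g : I -> T) s : {in s, f =1 g} -> graph_on f s = graph_on g s.
Proof.
move=> fg; rewrite /graph_on.
have -> // : [seq (i, f i) | i <- s] = [seq (i, g i) | i <- s].
by apply/eq_in_map => i /fg ->.
Qed.

Lemma graph_onP (s : seq I) (D : {set X}) :
  (exists f : {ffun I -> T}, D = graph_on f s) \/ (forall f : I -> T, D != graph_on f s).
Proof.
case: (boolP [exists f : {ffun I -> T}, D == graph_on f s]) => [/existsP[f /eqP]|nD].
  by left; exists f.
right=> f; apply: contraNneq nD => ->; apply/existsP; exists [ffun i => f i].
by rewrite (@eq_graph_on _ f) // => i _; rewrite ffunE.
Qed.

Lemma enum_graph_on (f : I -> T) :
  enum (graph_on f (enum I)) = [seq (i, f i) | i <- enum I].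
Proof.
have filter_graph (s : seq I) :
    [seq x <- [seq (x1, x2) | x1 <- s, x2 <- enum T] | x \in graph_on f (enum I)] =
    [seq (i, f i) | i <- s].
  elim: s => //= i s IH; rewrite filter_cat IH -cat1s; congr (_ ++ _).
  rewrite filter_map /= (@eq_filter _ _ (pred1 (f i))) => [|t].
    by rewrite filter_pred1_uniq ?enum_uniq ?mem_enum.
  by rewrite /preim /= mem_graph_on mem_enum.
rewrite {1}/enum_mem -enumT.
by rewrite (_ : enum {: X} = prod_enum I T) ?filter_graph // enumT unlock.
Qed.

Variable l : I -> ext X.
Hypothesis l_block : forall i, block i (l i).

Lemma extprod_blocks_graph (s : seq I) (f : I -> T) :
  uniq s -> sorted (fun i i' => enum_rank i < enum_rank i')%N s ->
  extprod [seq l i | i <- s] (graph_on f s) = \prod_(i <- s) l i [set (i, f i)].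
Proof.
elim: s => [|i s IH] /=; first by rewrite /graph_on /= set_nil ffunE eqxx big_nil.
move=> /andP[nis us] ps; have ss := path_sorted ps.
have i_first : all (fun j => enum_rank i < enum_rank j)%N s.
  by apply: (order_path_min _ ps) => ? ? ?; apply: ltn_trans.
rewrite extmulE graph_on_cons (bigD1 [set (i, f i)]) ?sub1set ?setU11 //=.
have -> : ((i, f i) |: graph_on f s) :\: [set (i, f i)] = graph_on f s.
  apply/setP => -[j u]; rewrite in_setD1 in_setU1 mem_graph_on.
  by case: eqP => [[-> ->]|] //=; rewrite (negbTE nis).
rewrite sgn_ordered ?IH // => [|x y].
  rewrite big_cons mul1r [X in _ + X]big1 ?addr0 // => A /andP[sAD nA].
  have [->|/l_block [t eA]] := eqVneq (l i A) 0; first by rewrite mulr0 mul0r.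
  move: sAD nA; rewrite eA sub1set in_setU1 mem_graph_on (negbTE nis) orbF.
  by move=> /eqP[->]; rewrite eqxx.
rewrite inE => /eqP ->; case: y => j u; rewrite mem_graph_on => /andP[js _].
exact/enum_rank_pair_lt/(allP i_first).
Qed.

Lemma extprod_blocks_nongraph (t0 : T) (s : seq I) (D : {set X}) :
  uniq s -> (forall f : I -> T, D != graph_on f s) -> extprod [seq l i | i <- s] D = 0.
Proof.
elim: s D => [|i s IH] D /= => [_ nD|/andP[nis us] nD].
  by rewrite ffunE; move: (nD (fun=> t0)); rewrite /graph_on /= set_nil => /negbTE ->.
rewrite extmulE big1 // => A sAD.
have [->|/l_block [t eA]] := eqVneq (l i A) 0; first by rewrite mulr0 mul0r.
rewrite IH ?mulr0 // => g; rewrite eA.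
apply: contra_neq (nD (fun j => if j == i then t else g j)) => DAg.
have itD : (i, t) \in D by rewrite -sub1set -eA.
rewrite -(setD1K itD) DAg graph_on_cons eqxx; congr (_ |: _); apply: eq_graph_on.
by move=> j js; case: eqP => // ji; rewrite -ji js in nis.
Qed.

End BlockProducts.

Lemma gen_set1 (X : finType) (x y : X) : gen x [set y] = (y == x)%:Z.
Proof. by rewrite ffunE (inj_eq set1_inj) natz. Qed.

Lemma prod_indicator (J : Type) (s : seq J) (P : pred J) :
  \prod_(j <- s) (P j)%:Z = (all P s)%:Z.
Proof.
elim: s => [|j s IH]; rewrite ?big_nil // big_cons IH /=.
by case: (P j); rewrite ?mul1r ?mul0r.
Qed.

Lemma sum_indicator (V : zmodType) (J : finType) (x : J -> V) (j0 : J) :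
  \sum_(j : J) x j *~ (j == j0)%:Z = x j0.
Proof.
by under eq_bigr => j _ do rewrite -pmulrn mulrb; rewrite -big_mkcond big_pred1_eq.
Qed.

Section Monomials.
Variable r : nat.
Local Notation graph f := (graph_on f (enum 'I_r)).

Definition copy2 (b : bool) : 'I_2 := if b then o2_1 else o2_0.

Lemma sorted_enum_ord :
  sorted (fun i i' : 'I_r => enum_rank i < enum_rank i')%N (enum 'I_r).
Proof.
have := iota_ltn_sorted 0 r; rewrite -val_enum_ord sorted_map.
by apply: sub_sorted => i i'; rewrite /relpre /= !enum_rank_ord.
Qed.

Lemma eq_graph_ord (T : finType) (f g : 'I_r -> T) :
  (graph f == graph g) = all (fun j => f j == g j) (enum 'I_r).
Proof.
apply/eqP/allP => [fg j _|fg]; last by apply: eq_graph_on => j /fg /eqP.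
have : (j, f j) \in graph g by rewrite -fg mem_graph_on mem_enum eqxx.
by rewrite mem_graph_on => /andP[].
Qed.

Lemma all_eq_ffun (e : {ffun 'I_r -> bool}) (h : 'I_r -> bool) :
  all (fun j => e j == h j) (enum 'I_r) = (e == [ffun j => h j]).
Proof.
apply/allP/eqP => [eh|-> j _]; last by rewrite ffunE.
by apply/ffunP => j; rewrite ffunE; apply/eqP/eh; rewrite mem_enum.
Qed.

Lemma wIE (e : {ffun 'I_r -> bool}) (A : {set X2 r}) :
  wI e A = (A == graph (fun j => copy2 (e j)))%:Z.
Proof.
have [[f ->]|notgraph] := graph_onP (enum 'I_r) A.
  rewrite /wI (extprod_blocks_graph (l := fun j => gen (j, copy2 (e j))))
    ?enum_uniq ?sorted_enum_ord // => [|j]; last exact: gen_block.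
  under eq_bigr => j _ do rewrite gen_set1 xpair_eqE eqxx /=.
  by rewrite prod_indicator eq_graph_ord.
rewrite (negbTE (notgraph _)).
rewrite /wI (@extprod_blocks_nongraph _ _ (fun j => gen (j, copy2 (e j))) _ o2_0)
  ?enum_uniq // => j; exact: gen_block.
Qed.

Lemma graph_copy2E (f : 'I_r -> 'I_2) (e : {ffun 'I_r -> bool}) :
  (graph f == graph (fun j => copy2 (e j))) = (e == [ffun j => f j == o2_1]).
Proof.
rewrite eq_graph_ord -all_eq_ffun; apply: eq_all => j.
by rewrite /copy2; case: (e j); case: (f j) => -[|[|]].
Qed.

Lemma SIE (D : {set X2 r}) : SI r D = \sum_(e : {ffun 'I_r -> bool}) wI e D.
Proof.
have sum_block (j : 'I_r) : block j (extadd (gen (j, o2_0)) (gen (j, o2_1))).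
  by apply: extadd_block; apply: gen_block.
under eq_bigr => e _ do rewrite wIE.
have [[f ->]|notgraph] := graph_onP (enum 'I_r) D; last first.
  rewrite /SI (@extprod_blocks_nongraph _ _ _ sum_block o2_0) ?enum_uniq //.
  by rewrite big1 // => e _; rewrite (negbTE (notgraph _)).
rewrite /SI (extprod_blocks_graph sum_block) ?enum_uniq ?sorted_enum_ord //.
rewrite big1 => [|j _]; last first.
  by rewrite ffunE !gen_set1 !xpair_eqE eqxx /=; case: (f j) => -[|[|]].
under eq_bigr => e _ do rewrite graph_copy2E.
by rewrite (bigD1 [ffun j => f j == o2_1]) //= eqxx big1 ?addr0 // => e /negbTE ->.
Qed.

Lemma wI_all_primed (e : {ffun 'I_r -> bool}) (A : {set X2 r}) :
  [forall j, e j] -> [exists x in A, x.2 == o2_0] -> wI e A = 0.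
Proof.
move=> /forallP primed /existsP[[j c] /andP[jcA /= /eqP c0]]; rewrite wIE.
case: eqP => // eA; move: jcA; rewrite eA c0 mem_graph_on /copy2 primed.
by rewrite mem_enum.
Qed.
End Monomials.

Definition copies (r : nat) (k : 'I_3) (e : {ffun 'I_r -> bool}) (j : 'I_r) : 'I_3 :=
  if e j then k else o3_0.

Lemma ffun_copies (r : nat) (e : {ffun 'I_r -> bool}) (k : 'I_3) (P : pred 'I_3) :
  P k -> ~~ P o3_0 -> [ffun j => P (copies k e j)] = e.
Proof.
move=> Pk nP0; apply/ffunP => j; rewrite ffunE /copies.
by case: (e j); rewrite ?Pk ?(negbTE nP0).
Qed.

Section Images.
Variables (B : algType rat) (r : nat) (a : {ffun 'I_r -> bool} -> B).
Local Notation graph f := (graph_on f (enum 'I_r)).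

Lemma Bmap_chiI (phi : X2 r -> ext (X3 r)) (D : {set X3 r}) :
  Bmap phi (chiI a) D =
  \sum_(e : {ffun 'I_r -> bool}) a e *~ extmap phi (graph (fun j => copy2 (e j))) D.
Proof.
rewrite ffunE; under eq_bigr => A _ do rewrite ffunE mulrz_suml.
rewrite exchange_big /=; apply: eq_bigr => e _.
by under eq_bigr => A _ do rewrite wIE -mulrzA mulrC mulrzA; rewrite sum_indicator.
Qed.

Lemma Bmap_chiI_graph (phi : X2 r -> ext (X3 r)) (p h : 'I_3 -> bool)
    (phi_block : forall j c, block j (phi (j, c)))
    (phi_coef : forall j b t, phi (j, copy2 b) [set (j, t)] = (p t && (b == h t))%:Z)
    (g : 'I_r -> 'I_3) :
  Bmap phi (chiI a) (graph g) =
  if all (fun j => p (g j)) (enum 'I_r) then a [ffun j => h (g j)] else 0.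
Proof.
rewrite Bmap_chiI.
have extmap_graph (e : {ffun 'I_r -> bool}) :
    extmap phi (graph (fun j => copy2 (e j))) (graph g) =
    (all (fun j => p (g j)) (enum 'I_r) && (e == [ffun j => h (g j)]))%:Z.
  rewrite /extmap enum_graph_on -map_comp.
  rewrite (extprod_blocks_graph (l := fun j => phi (j, copy2 (e j))))
    ?enum_uniq ?sorted_enum_ord //.
  under eq_bigr => j _ do rewrite phi_coef.
  by rewrite prod_indicator (all_predI (fun j => p (g j))) all_eq_ffun.
under eq_bigr => e _ do rewrite extmap_graph.
case: ifP => _; first exact: sum_indicator.
by rewrite big1 // => e _; rewrite mulr0z.
Qed.

Lemma beta_chiI_graph (g : 'I_r -> 'I_3) :
  Bmap (@beta_gen r) (chiI a) (graph g) = a [ffun j => g j == o3_2].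
Proof.
rewrite (@Bmap_chiI_graph _ xpredT (fun t => t == o3_2)) ?all_predT // => j.
  by move=> c; rewrite /beta_gen; case: ifP => _;
    [apply: extadd_block; apply: gen_block|apply: gen_block].
by move=> [] t; rewrite /beta_gen /= ?[extadd _ _ _]ffunE !gen_set1 !xpair_eqE eqxx /=;
  case: t => -[|[|[|]]].
Qed.

Lemma gamma_chiI_graph (g : 'I_r -> 'I_3) :
  Bmap (@gamma_gen r) (chiI a) (graph g) = a [ffun j => g j != o3_0].
Proof.
rewrite (@Bmap_chiI_graph _ xpredT (fun t => t != o3_0)) ?all_predT // => j.
  by move=> c; rewrite /gamma_gen; case: ifP => _;
    [apply: gen_block|apply: extadd_block; apply: gen_block].
by move=> [] t; rewrite /gamma_gen /= ?[extadd _ _ _]ffunE !gen_set1 !xpair_eqE eqxx /=;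
  case: t => -[|[|[|]]].
Qed.

Lemma delta_chiI_graph (g : 'I_r -> 'I_3) :
  Bmap (@delta_gen r) (chiI a) (graph g) =
  if all (fun j => g j != o3_0) (enum 'I_r) then a [ffun j => g j == o3_2] else 0.
Proof.
rewrite (@Bmap_chiI_graph _ (fun t => t != o3_0) (fun t => t == o3_2)) // => j.
  by move=> c; rewrite /delta_gen; case: ifP => _; apply: gen_block.
by move=> [] t; rewrite /delta_gen /= !gen_set1 !xpair_eqE eqxx /=;
  case: t => -[|[|[|]]].
Qed.

Lemma beta_chiI_copies (e : {ffun 'I_r -> bool}) :
  Bmap (@beta_gen r) (chiI a) (graph (copies o3_2 e)) = a e.
Proof. by rewrite beta_chiI_graph (@ffun_copies _ e o3_2 (fun t => t == o3_2)). Qed.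

Lemma beta_chiI_copies1 (e : {ffun 'I_r -> bool}) :
  Bmap (@beta_gen r) (chiI a) (graph (copies o3_1 e)) = a [ffun => false].
Proof.
by rewrite beta_chiI_graph; congr a; apply/ffunP => j; rewrite !ffunE /copies; case: (e j).
Qed.

Lemma gamma_chiI_copies1 (e : {ffun 'I_r -> bool}) :
  Bmap (@gamma_gen r) (chiI a) (graph (copies o3_1 e)) = a e.
Proof. by rewrite gamma_chiI_graph (@ffun_copies _ e o3_1 (fun t => t != o3_0)). Qed.

Lemma delta_chiI_copies (e : {ffun 'I_r -> bool}) :
  Bmap (@delta_gen r) (chiI a) (graph (copies o3_2 e)) = if [forall j, e j] then a e else 0.
Proof.
rewrite delta_chiI_graph (@ffun_copies _ e o3_2 (fun t => t == o3_2)) //.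
have -> // : all (fun j => copies o3_2 e j != o3_0) (enum 'I_r) = [forall j, e j].
apply/allP/forallP => [nz j|primed j _]; last by rewrite /copies primed.
by move: (nz j (mem_enum _ j)); rewrite /copies; case: (e j).
Qed.
End Images.

Theorem mainTheorem10 (B : algType rat) (Bd : nat -> pred B) (HB : graded_comm Bd)
    (r : nat) (hr : (0 < r)%N) (a : {ffun 'I_r -> bool} -> B) :
  [/\ (Bmap (@beta_gen r) (chiI a) = Bmap (@gamma_gen r) (chiI a) ->
         exists a0 : B, chiI a = tens a0 (SI r)),
      (Bmap (@beta_gen r) (chiI a) = Bzero B (X3 r) -> chiI a = Bzero B (X2 r))
    & (Bmap (@beta_gen r) (chiI a) = Bmap (@delta_gen r) (chiI a) -> in_B_1_LW (chiI a)) ].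
Proof.
split=> [beta_gamma | beta0 | beta_delta].
- (* (A): all coefficients a_I^eps are equal, so chi_I = a_I^0 S_I *)
  have a_const e : a e = a [ffun => false].
    by rewrite -(gamma_chiI_copies1 a e) -beta_gamma beta_chiI_copies1.
  exists (a [ffun => false]); apply/ffunP => D; rewrite !ffunE SIE mulrz_sumr.
  by apply: eq_bigr => e _; rewrite a_const.
- (* (B): every coefficient a_I^eps vanishes *)
  apply/ffunP => D; rewrite !ffunE big1 // => e _.
  by rewrite -(beta_chiI_copies a e) beta0 ffunE mul0rz.
- (* (C): only the constantly primed coefficient survives *)
  move=> A unprimed; rewrite ffunE big1 // => e _.
  have [primed|not_primed] := boolP [forall j, e j].
    by rewrite wI_all_primed ?mulr0z.
  rewrite -(beta_chiI_copies a e) beta_delta delta_chiI_copies.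
  by rewrite (negbTE not_primed) mul0rz.
Qed.
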